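(* Let $\mathbb{K}\in\{\mathbb{R},\mathbb{C}\}$, $\star\in\{*,T\}$, $\epsilon_1,\epsilon_2\in\{1,-1\}$, and let $Q(\lambda)=\lambda^2M+\lambda D+K\in\mathbb{K}^{n\times n}[\lambda]$ satisfy $M^\star=\epsilon_1M$, $D^\star=\epsilon_2D$, $K^\star=\epsilon_1K$. If $(X,\Lambda)\in\mathbb{K}^{n\times p}\times\mathbb{K}^{p\times p}$ is an invariant pair of $Q(\lambda)$ with $\sigma(\epsilon_1\epsilon_2\Lambda^\star)\cap\sigma(\Lambda)=\emptyset$, then $X^\star MX\Lambda+\epsilon_1\epsilon_2\Lambda^\star X^\star MX+X^\star DX=0$.
   Context: For a matrix $A$, $A^*$ is the conjugate transpose and $A^T$ the transpose; $A^\star$ means $A^*$ if $\star=*$ and $A^T$ if $\star=T$. $\sigma(A)$ is the spectrum. A pair $(X,\Lambda)$ is an invariant pair of $Q(\lambda)$ if $MX\Lambda^2+DX\Lambda+KX=0$. *)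

From HB Require Import structures.
From mathcomp Require Import all_boot all_order all_algebra.
From mathcomp Require Import reals.
From mathcomp.real_closed Require Import complex.
Set Implicit Arguments. Unset Strict Implicit. Unset Printing Implicit Defensive.
Import Order.TTheory GRing.Theory Num.Theory.
Local Open Scope ring_scope.

(* Generic setting: matrices over a field K, whose spectra are taken in an
   algebraically closed field C via a ring embedding iota : K -> C, and an
   entrywise conjugation conjK on K.  Star flag: true = conjugate transpose
   ( * ), false = plain transpose ( T ). *)
Section Generic.
Variables (K C : fieldType) (iota : {rmorphism K -> C}) (conjK : K -> K).

Definition mxstar (star : bool) m n (A : 'M[K]_(m, n)) : 'M[K]_(n, m) :=
  if star then map_mx conjK A^T else A^T.

Definition spectrum p (A : 'M[K]_p) : pred C :=
  [pred z | root (char_poly (map_mx iota A)) z].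

Definition invariant_pair n p (M D Kq : 'M[K]_n) (X : 'M[K]_(n, p))
  (L : 'M[K]_p) : Prop :=
  M *m X *m (L *m L) + D *m X *m L + Kq *m X = 0.

Definition cor24_statement : Prop :=
  forall (star : bool) (e1 e2 : K), (e1 = 1 \/ e1 = -1) -> (e2 = 1 \/ e2 = -1) ->
  forall (n p : nat) (M D Kq : 'M[K]_n) (X : 'M[K]_(n, p)) (L : 'M[K]_p),
    mxstar star M = e1 *: M -> mxstar star D = e2 *: D ->
    mxstar star Kq = e1 *: Kq ->
    invariant_pair M D Kq X L ->
    (forall z : C, ~ (spectrum ((e1 * e2) *: mxstar star L) z /\ spectrum L z)) ->
    mxstar star X *m M *m X *m L
      + (e1 * e2) *: (mxstar star L *m mxstar star X *m M *m X)
      + mxstar star X *m D *m X = 0.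
End Generic.

Definition real_case (R : realType) : Prop :=
  @cor24_statement R R[i] (real_complex R) id.

Definition complex_case (R : realType) : Prop :=
  @cor24_statement R[i] R[i] idfun (fun z => z^*).

From HB Require Import structures.
From mathcomp Require Import all_boot all_order all_algebra.
From mathcomp Require Import reals.
From mathcomp.real_closed Require Import complex.
Set Implicit Arguments. Unset Strict Implicit. Unset Printing Implicit Defensive.
Import Order.TTheory GRing.Theory Num.Theory.
Local Open Scope ring_scope.
Local Open Scope sesquilinear_scope.

(* Multiplying the invariant-pair equation on the left by X^⋆ gives
   A Λ^2 + B Λ + K' = 0 with A = X^⋆ M X, B = X^⋆ D X, K' = X^⋆ K X, which
   inherit the symmetry of M, D, K.  Applying ⋆ to this equation gives the
   mirrored equation Λ'^2 A + Λ' B + K' = 0 with Λ' = ε1 ε2 Λ^⋆, and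
   subtracting the two shows that Z = A Λ + Λ' A + B solves the homogeneous
   Sylvester equation Λ' Z = Z Λ.  When Λ' and Λ have disjoint spectra their
   characteristic polynomials are coprime, and a Bezout identity combined
   with Cayley-Hamilton forces Z = 0.  Both choices of ⋆ are A ↦ (A^T)^f for
   an involutive ring morphism f (identity or complex conjugation), which is
   all the argument uses. *)

Lemma horner_mx_intertwine (R : comNzRingType) m p
    (B : 'M[R]_m.+1) (L : 'M[R]_p.+1) (Z : 'M[R]_(m.+1, p.+1)) (r : {poly R}) :
  B *m Z = Z *m L -> horner_mx B r *m Z = Z *m horner_mx L r.
Proof.
move=> BZ_ZL; elim/poly_ind: r => [|r c IHr]; first by rewrite !rmorph0 mul0mx mulmx0.
rewrite !rmorphD !rmorphM /= !horner_mx_X !horner_mx_C.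
rewrite mulmxDl mulmxDr -!mulmxE -!mulmxA BZ_ZL !mulmxA IHr -!mulmxA.
by rewrite mul_scalar_mx mul_mx_scalar.
Qed.

Lemma sylvester_homogeneous_eq0 (K : fieldType) (C : closedFieldType)
    (iota : {rmorphism K -> C}) m p (B : 'M[K]_m) (L : 'M[K]_p) (Z : 'M[K]_(m, p)) :
  B *m Z = Z *m L ->
  (forall z, ~ (root (char_poly (map_mx iota B)) z /\
                root (char_poly (map_mx iota L)) z)) ->
  Z = 0.
Proof.
case: m B Z => [|m] B Z; first by move=> _ _; apply/matrixP => [[]].
case: p L Z => [|p] L Z; first by move=> _ _; apply/matrixP => ? [].
move=> BZ_ZL disjoint_spectra.
have /Bezout_eq1_coprimepP [[u v] /= bezout] : coprimep (char_poly L) (char_poly B).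
  rewrite -(coprimep_map iota) !map_char_poly.
  apply: Pdiv.ClosedField.root_coprimep => z rootL; apply/negP => rootB.
  exact: (disjoint_spectra z).
have <- : horner_mx B (u * char_poly L + v * char_poly B) *m Z = Z.
  by rewrite bezout rmorph1 mul1mx.
rewrite rmorphD !rmorphM /= mulmxDl -!mulmxE -!mulmxA.
rewrite Cayley_Hamilton (horner_mx_intertwine _ BZ_ZL) Cayley_Hamilton.
by rewrite !(mulmx0, mul0mx, addr0).
Qed.

Lemma mirrored_quadratic_intertwine (R : pzRingType) (a b k l l' : R) :
  a * l * l + b * l + k = 0 -> l' * l' * a + l' * b + k = 0 ->
  l' * (a * l + l' * a + b) = (a * l + l' * a + b) * l.
Proof.
move=> quad mirror; have same_sum : a * l * l + b * l = l' * l' * a + l' * b.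
  by apply: (addIr k); rewrite quad mirror.
by rewrite !mulrDl !mulrDr !mulrA -addrA addrC [RHS]addrAC same_sum.
Qed.

Lemma sign_mulss (R : pzRingType) (e : R) : e = 1 \/ e = -1 -> e * e = 1.
Proof. by case=> ->; rewrite ?mulrNN mulr1. Qed.

Section InvolutiveAdjoint.
Variables (K : fieldType) (f : involutive_rmorphism K).

Lemma maptrmxM m n q (A : 'M[K]_(m, n)) (B : 'M[K]_(n, q)) :
  (A *m B) ^t f = B ^t f *m A ^t f.
Proof. by rewrite trmx_mul map_mxM. Qed.

Lemma maptrmxK m n (A : 'M[K]_(m, n)) : A ^t f ^t f = A.
Proof. by apply/matrixP => i j; rewrite !mxE rmorphK. Qed.

Lemma maptrmxD m n (A B : 'M[K]_(m, n)) : (A + B) ^t f = A ^t f + B ^t f.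
Proof. by rewrite linearD map_mxD. Qed.

Lemma maptrmx0 m n : (0 : 'M[K]_(m, n)) ^t f = 0.
Proof. by rewrite linear0 map_mx0. Qed.

Lemma maptrmx_congr n p e (M : 'M[K]_n) (X : 'M[K]_(n, p)) :
  M ^t f = e *: M -> (X ^t f *m M *m X) ^t f = e *: (X ^t f *m M *m X).
Proof. by move=> sym_M; rewrite !maptrmxM maptrmxK sym_M -scalemxAl -scalemxAr mulmxA. Qed.

Lemma maptrmx_mirrored_quadratic p (e1 e2 : K) (A B K' L : 'M[K]_p) :
  e1 = 1 \/ e1 = -1 -> e2 = 1 \/ e2 = -1 ->
  A ^t f = e1 *: A -> B ^t f = e2 *: B -> K' ^t f = e1 *: K' ->
  A *m L *m L + B *m L + K' = 0 ->
  ((e1 * e2) *: L ^t f) *m ((e1 * e2) *: L ^t f) *m A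
    + ((e1 * e2) *: L ^t f) *m B + K' = 0.
Proof.
move=> sign_e1 sign_e2 sym_A sym_B sym_K' /(congr1 (fun Y => e1 *: Y ^t f)).
rewrite !maptrmxD !maptrmxM sym_A sym_B sym_K' maptrmx0 scaler0 !scalerDr.
rewrite -!scalemxAr !scalerA sign_mulss // !scale1r => <-.
have sign_e : (e1 * e2) * (e1 * e2) = 1.
  by rewrite mulrACA (sign_mulss sign_e1) (sign_mulss sign_e2) mulr1.
by rewrite -!scalemxAl scalerA sign_e scale1r mulmxA.
Qed.

Lemma invariant_pair_maptrmx_eq0 (C : closedFieldType) (iota : {rmorphism K -> C})
    (e1 e2 : K) n p (M D Kq : 'M[K]_n) (X : 'M[K]_(n, p)) (L : 'M[K]_p) :
  e1 = 1 \/ e1 = -1 -> e2 = 1 \/ e2 = -1 ->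
  M ^t f = e1 *: M -> D ^t f = e2 *: D -> Kq ^t f = e1 *: Kq ->
  invariant_pair M D Kq X L ->
  (forall z, ~ (spectrum iota ((e1 * e2) *: L ^t f) z /\ spectrum iota L z)) ->
  X ^t f *m M *m X *m L + (e1 * e2) *: (L ^t f *m X ^t f *m M *m X)
    + X ^t f *m D *m X = 0.
Proof.
move=> sign_e1 sign_e2 sym_M sym_D sym_Kq inv disjoint_spectra.
set A := X ^t f *m M *m X; set B := X ^t f *m D *m X.
have -> : L ^t f *m X ^t f *m M *m X = L ^t f *m A by rewrite /A !mulmxA.
have projected : A *m L *m L + B *m L + X ^t f *m Kq *m X = 0.
  by move: (congr1 (mulmx (X ^t f)) inv); rewrite mulmx0 !mulmxDr !mulmxA.
have := maptrmx_mirrored_quadratic sign_e1 sign_e2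
  (maptrmx_congr X sym_M) (maptrmx_congr X sym_D) (maptrmx_congr X sym_Kq) projected.
rewrite -/A -/B !mulmxE => mirrored; rewrite !mulmxE in projected.
apply: (sylvester_homogeneous_eq0 _ disjoint_spectra).
rewrite scalemxAl !mulmxE.
exact: mirrored_quadratic_intertwine projected mirrored.
Qed.

End InvolutiveAdjoint.

Lemma cor24_statement_maptrmx (K : fieldType) (C : closedFieldType)
    (iota : {rmorphism K -> C}) (conjK : K -> K)
    (adjoint : bool -> involutive_rmorphism K) :
  (forall star m n (A : 'M[K]_(m, n)), mxstar conjK star A = A ^t adjoint star) ->
  cor24_statement iota conjK.
Proof.
move=> star_adjoint star e1 e2 sign_e1 sign_e2 n p M D Kq X L; rewrite !star_adjoint.
exact: invariant_pair_maptrmx_eq0.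
Qed.

Theorem corollary2p4 (R : realType) : real_case R /\ complex_case R.
Proof.
split.
  apply: (cor24_statement_maptrmx (adjoint := fun=> idfun)) => star m n A.
  by case: star; rewrite /mxstar map_mx_id.
apply: (cor24_statement_maptrmx
  (adjoint := fun star => if star then Num.conj_op : involutive_rmorphism _ else idfun)).
by case=> m n A //; rewrite /mxstar map_mx_id.
Qed.
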